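(* Let $(\Omega,\mathcal{F})$ be a measurable space, $\mathrm{B}_b$ the space of bounded real-valued measurable functions, $C\subset\mathrm{B}_b$ a linear subspace containing the constants, and $H\colon C\to\mathbb{R}$ a sublinear premium principle, i.e. a convex premium principle with $H(\lambda X)=\lambda H(X)$ for all $X\in C$, $\lambda>0$. Then $R_{\mathrm{Max}}(X):=\inf\{H(X_0)\mid X_0\in C,\ X_0\ge X\}$ is a coherent risk measure given by $$R_{\mathrm{Max}}(X)=\max_{\mathbb{P}\in\mathcal{P}}\mathbb{E}_{\mathbb{P}}(X)\quad\text{for all }X\in\mathrm{B}_b,$$ where $\mathcal{P}=\{\mathbb{P}\in\mathrm{ba}_+^1\mid \mathbb{E}_{\mathbb{P}}(X)\le H(X)\text{ for all }X\in C\}$.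
   Context: A premium principle is a map $H\colon C\to\mathbb{R}$ with $H(X+m)=H(X)+m$ for $X\in C$, $m\in\mathbb{R}$, $H(0)=0$, and $H(X)\ge0$ for $X\in C$ with $X\ge0$ (pointwise order). Convex means $H(\lambda X+(1-\lambda)Y)\le\lambda H(X)+(1-\lambda)H(Y)$ for $\lambda\in[0,1]$. $\mathrm{ba}_+^1$ is the set of finitely additive probability measures on $(\Omega,\mathcal{F})$ and $\mathbb{E}_{\mathbb{P}}$ the associated integral. *)

From HB Require Import structures.
From mathcomp Require Import all_boot all_order all_algebra.
From mathcomp Require Import all_classical all_reals.
From mathcomp Require Import ereal measure lebesgue_measure numfun.
From Stdlib Require List.
Set Implicit Arguments. Unset Strict Implicit. Unset Printing Implicit Defensive.
Import Order.TTheory GRing.Theory Num.Theory.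
Local Open Scope classical_set_scope.
Local Open Scope ring_scope.

Section Defs.
Context (d : measure_display) (T : measurableType d) (R : realType).

Definition Bb (X : T -> R) : Prop :=
  measurable_fun setT X /\ exists M : R, forall w, `|X w| <= M.

Definition linear_subspace_with_constants (C : set (T -> R)) : Prop :=
  [/\ C `<=` Bb,
      (forall m : R, C (fun _ => m)),
      (forall X Y, C X -> C Y -> C (fun w => X w + Y w)) &
      (forall (a : R) X, C X -> C (fun w => a * X w))].

Definition premium_principle (C : set (T -> R)) (H : (T -> R) -> R) : Prop :=
  [/\ (forall X (m : R), C X -> H (fun w => X w + m) = H X + m),
      H (fun _ => 0) = 0 &
      (forall X, C X -> (forall w, 0 <= X w) -> 0 <= H X)].

Definition convex_on (C : set (T -> R)) (H : (T -> R) -> R) : Prop :=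
  forall X Y (l : R), C X -> C Y -> 0 <= l <= 1 ->
    H (fun w => l * X w + (1 - l) * Y w) <= l * H X + (1 - l) * H Y.

Definition pos_homogeneous_on (C : set (T -> R)) (H : (T -> R) -> R) : Prop :=
  forall X (l : R), C X -> 0 < l -> H (fun w => l * X w) = l * H X.

Definition sublinear_premium_principle (C : set (T -> R)) (H : (T -> R) -> R) :=
  [/\ premium_principle C H, convex_on C H & pos_homogeneous_on C H].

Definition ba1 (P : set T -> R) : Prop :=
  [/\ (forall A, measurable A -> 0 <= P A),
      P setT = 1 &
      (forall A B, measurable A -> measurable B -> A `&` B = set0 ->
         P (A `|` B) = P A + P B)].

Definition simple_eval (s : seq (R * set T)) (w : T) : R :=
  \sum_(p <- s) p.1 * \1_(p.2) w.

Definition simple_int (P : set T -> R) (s : seq (R * set T)) : R :=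
  \sum_(p <- s) p.1 * P p.2.

Definition simple_below (X : T -> R) (s : seq (R * set T)) : Prop :=
  (forall p, List.In p s -> measurable p.2) /\ (forall w, simple_eval s w <= X w).

(* E_P(X) for bounded measurable X: supremum of integrals of measurable
   simple functions below X (the standard finitely additive integral) *)
Definition expect (P : set T -> R) (X : T -> R) : R :=
  sup [set simple_int P s | s in simple_below X].

Definition RMax (C : set (T -> R)) (H : (T -> R) -> R) (X : T -> R) : \bar R :=
  ereal_inf [set (H X0)%:E | X0 in [set X0 | C X0 /\ forall w, X w <= X0 w]].

Definition coherent_risk_measure (rho : (T -> R) -> R) : Prop :=
  [/\ (forall X Y, Bb X -> Bb Y -> (forall w, X w <= Y w) -> rho X <= rho Y),
      (forall X (m : R), Bb X -> rho (fun w => X w + m) = rho X + m),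
      rho (fun _ => 0) = 0,
      (forall X Y (l : R), Bb X -> Bb Y -> 0 <= l <= 1 ->
         rho (fun w => l * X w + (1 - l) * Y w) <= l * rho X + (1 - l) * rho Y) &
      (forall X (l : R), Bb X -> 0 < l -> rho (fun w => l * X w) = l * rho X)].

Definition Pset (C : set (T -> R)) (H : (T -> R) -> R) : set (set T -> R) :=
  [set P | ba1 P /\ forall X, C X -> expect P X <= H X].

End Defs.

(* R_Max inherits subadditivity and positive homogeneity from H on B_b, and it
   is monotone and cash-additive, hence a coherent risk measure. For a given X,
   the Hahn-Banach theorem (Zorn's lemma on graphs of partial linear
   functionals dominated by R_Max) gives a linear L <= R_Max on B_b with
   L X = R_Max X. Monotonicity of R_Max forces L >= 0 and L 1 = 1, so
   P A := L 1_A is a finitely additive probability, and approximating bounded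
   measurable functions from below by simple ones shows E_P = L on B_b. As
   L <= R_Max <= H on C, P lies in the set of the statement; conversely
   E_P X <= E_P X0 <= H X0 for every X0 >= X in C. *)

From HB Require Import structures.
From mathcomp Require Import all_boot all_order all_algebra.
From mathcomp Require Import all_classical all_reals.
From mathcomp Require Import ereal measure lebesgue_measure numfun.
From mathcomp Require Import ring lra measurable_realfun.
From Stdlib Require List.
Import Order.TTheory GRing.Theory Num.Theory.
Local Open Scope classical_set_scope.
Local Open Scope ring_scope.
Set Implicit Arguments. Unset Strict Implicit. Unset Printing Implicit Defensive.

Section HahnBanach.
Variables (R : realType) (V : lmodType R) (D : set V) (p : V -> R).
Hypotheses (D0 : D 0)
  (DD : forall x y, D x -> D y -> D (x + y))
  (DZ : forall k x, D x -> D (k *: x))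
  (p_subadd : forall x y, D x -> D y -> p (x + y) <= p x + p y)
  (p_homo : forall x t, D x -> 0 < t -> p (t *: x) = t * p x).

Let p0 : p 0 = 0.
Proof. by have := p_homo D0 (ltr0Sn _ 1); rewrite scaler0; lra. Qed.

Let DB x y : D x -> D y -> D (x - y).
Proof. by move=> Dx Dy; rewrite -scaleN1r; apply/DD/DZ. Qed.

Definition dominated_linear_graph (G : set (V * R)) :=
  [/\ forall x a, G (x, a) -> D x /\ a <= p x,
      forall x a b, G (x, a) -> G (x, b) -> a = b,
      forall x a y b, G (x, a) -> G (y, b) -> G (x + y, a + b) &
      forall k x a, G (x, a) -> G (k *: x, k * a)].

Definition graph_ext (G : set (V * R)) y c : set (V * R) :=
  [set z | exists x a t, G (x, a) /\ z = (x + t *: y, a + t * c)].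

Definition ext_admissible (G : set (V * R)) y c :=
  forall x a, G (x, a) -> a - p (x - y) <= c <= p (x + y) - a.

Lemma sub_graph_ext G y c : G `<=` graph_ext G y c.
Proof. by move=> [x a] Gxa; exists x, a, 0; rewrite scale0r mul0r !addr0. Qed.

Lemma mem_graph_ext G y c x a : dominated_linear_graph G -> G (x, a) ->
  graph_ext G y c (y, c).
Proof.
move=> [_ _ _ GZ] Gxa; exists 0, 0, 1; rewrite scale1r mul1r !add0r; split => //.
by have := GZ 0 _ _ Gxa; rewrite scale0r mul0r.
Qed.

Lemma ext_admissible_exists G y x0 a0 : dominated_linear_graph G -> D y ->
  G (x0, a0) -> exists c, ext_admissible G y c.
Proof.
move=> [Gdom _ GD _] Dy Gx0.
have lower_le_upper x a x' a' : G (x, a) -> G (x', a') ->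
    a - p (x - y) <= p (x' + y) - a'.
  move=> Gxa Gxa'; have [Dx _] := Gdom _ _ Gxa; have [Dx' _] := Gdom _ _ Gxa'.
  have [_ le_sum] := Gdom _ _ (GD _ _ _ _ Gxa Gxa').
  have := p_subadd (DB Dx Dy) (DD Dx' Dy).
  rewrite addrACA addNr addr0; lra.
pose S := [set r | exists x a, G (x, a) /\ r = a - p (x - y)].
have S0 : S !=set0 by exists (a0 - p (x0 - y)), x0, a0.
have S_ub x' a' : G (x', a') -> ubound S (p (x' + y) - a').
  by move=> Gxa' _ [x [a [Gxa ->]]]; exact: lower_le_upper Gxa Gxa'.
have S_sup : has_sup S by split => //; exists (p (x0 + y) - a0); exact: S_ub.
exists (sup S) => x a Gxa; apply/andP; split; last exact: ge_sup (S_ub _ _ Gxa).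
by apply: sup_upper_bound => //; exists x, a.
Qed.

Lemma ext_admissible_le G y c x a t : dominated_linear_graph G -> D y ->
  ext_admissible G y c -> G (x, a) -> 0 < t ->
  a + t * c <= p (x + t *: y) /\ a - t * c <= p (x - t *: y).
Proof.
move=> [Gdom _ _ GZ] Dy hc Gxa t0; have [Dx _] := Gdom _ _ Gxa.
have /andP[lo up] := hc _ _ (GZ t^-1 _ _ Gxa).
have tK : t * t^-1 = 1 by rewrite mulfV ?gt_eqF.
have -> : x + t *: y = t *: (t^-1 *: x + y) by rewrite scalerDr scalerA tK scale1r.
have -> : x - t *: y = t *: (t^-1 *: x - y) by rewrite scalerBr scalerA tK scale1r.
rewrite !p_homo //; [|exact/DB/Dy/DZ|exact/DD/Dy/DZ].
have := ler_wpM2l (ltW t0) lo; have := ler_wpM2l (ltW t0) up.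
rewrite !mulrBr !mulrA tK !mul1r; lra.
Qed.

Lemma graph_ext_functional G y c : dominated_linear_graph G ->
  ~ (exists a, G (y, a)) ->
  forall x a b, graph_ext G y c (x, a) -> graph_ext G y c (x, b) -> a = b.
Proof.
move=> [_ Gfun GD GZ] ny z a b [x1 [a1 [t1 [G1 [-> ->]]]]] [x2 [a2 [t2 [G2 []]]]].
have [<-|t12] := eqVneq t1 t2.
  by move=> /addIr ex ->; rewrite ex in G1; rewrite (Gfun _ _ _ G1 G2).
move=> e _; exfalso; apply: ny.
have ey : y = (t1 - t2)^-1 *: (x2 - x1).
  rewrite -[x2 - x1](_ : (t1 - t2) *: y = _); last first.
    by rewrite scalerBl -(addKr x1 (t1 *: y)) e addrA addrK addrC.
  by rewrite scalerA mulVf ?scale1r // subr_eq0.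
exists ((t1 - t2)^-1 * (a2 + -1 * a1)); rewrite ey -scaleN1r.
exact: GZ _ _ _ (GD _ _ _ _ G2 (GZ _ _ _ G1)).
Qed.

Lemma graph_ext_dominated G y c : dominated_linear_graph G -> D y ->
  ~ (exists a, G (y, a)) -> ext_admissible G y c ->
  dominated_linear_graph (graph_ext G y c).
Proof.
move=> hG Dy ny hc; have [Gdom _ GD GZ] := hG; split.
- move=> _ _ [x [a [t [Gxa [-> ->]]]]]; have [Dx pa] := Gdom _ _ Gxa.
  split; first exact/DD/DZ.
  have [t0|t0|<-] := ltrgtP 0 t.
  + by case: (ext_admissible_le hG Dy hc Gxa t0).
  + have /(ext_admissible_le hG Dy hc Gxa)[_] : 0 < - t by rewrite oppr_gt0.
    by rewrite scaleNr opprK mulNr opprK.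
  + by rewrite scale0r mul0r !addr0.
- exact: graph_ext_functional.
- move=> _ _ _ _ [x [a [t [Gxa [-> ->]]]]] [x' [a' [t' [Gxa' [-> ->]]]]].
  exists (x + x'), (a + a'), (t + t'); split; first exact: GD.
  by congr (_, _); rewrite addrACA -?scalerDl -?mulrDl.
- move=> k _ _ [x [a [t [Gxa [-> ->]]]]].
  exists (k *: x), (k * a), (k * t); split; first exact: GZ.
  by rewrite scalerDr scalerA mulrDr mulrA.
Qed.

Lemma bigcup_dominated_linear_graph (F : set (set (V * R))) :
  (forall G, F G -> dominated_linear_graph G) -> total_on F subset ->
  dominated_linear_graph (\bigcup_(G in F) G).
Proof.
move=> Fdom Ftot.
have common z z' : (\bigcup_(G in F) G) z -> (\bigcup_(G in F) G) z' ->
    exists2 G, F G & G z /\ G z'.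
  move=> [G1 FG1 G1z] [G2 FG2 G2z']; have [G12|G21] := Ftot _ _ FG1 FG2.
    by exists G2 => //; split => //; exact: G12.
  by exists G1 => //; split => //; exact: G21.
split.
- by move=> x a [G /Fdom[Gdom _ _ _] /Gdom].
- move=> x a b Ga Gb; have [G /Fdom[_ Gfun _ _] [Gxa Gxb]] := common _ _ Ga Gb.
  exact: Gfun Gxa Gxb.
- move=> x a y b Ga Gb; have [G FG [Gxa Gyb]] := common _ _ Ga Gb.
  by exists G => //; have [_ _ GD _] := Fdom _ FG; exact: GD Gxa Gyb.
- move=> k x a [G FG Gxa]; exists G => //.
  by have [_ _ _ GZ] := Fdom _ FG; exact: GZ Gxa.
Qed.

Lemma dominated_linear_graph0 : dominated_linear_graph [set (0, 0)].
Proof.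
split.
- by move=> x a [-> ->]; rewrite p0.
- by move=> x a b [_ ->] [_ ->].
- by move=> x a y b [-> ->] [-> ->]; rewrite !addr0.
- by move=> k x a [-> ->]; rewrite scaler0 mulr0.
Qed.

Lemma exists_dominated_linear_graph x0 : D x0 ->
  exists2 G, dominated_linear_graph G & G (x0, p x0).
Proof.
move=> Dx0; have [->|x0_neq0] := eqVneq x0 0.
  by exists [set (0, 0)]; rewrite ?p0 //; exact: dominated_linear_graph0.
exists (graph_ext [set (0, 0)] x0 (p x0)); last first.
  by apply: (@mem_graph_ext _ _ _ 0 0) => //; exact: dominated_linear_graph0.
apply: graph_ext_dominated => //; first exact: dominated_linear_graph0.
  by move=> [a [/eqP]]; rewrite (negbTE x0_neq0).
move=> _ _ [-> ->]; rewrite !sub0r add0r subr0 lexx andbT.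
have := p_subadd Dx0 (DZ (-1) Dx0); rewrite scaleN1r subrr p0; lra.
Qed.

Theorem hahn_banach x0 : D x0 -> exists L : V -> R,
  [/\ forall x y, D x -> D y -> L (x + y) = L x + L y,
      forall k x, D x -> L (k *: x) = k * L x,
      forall x, D x -> L x <= p x & L x0 = p x0].
Proof.
move=> Dx0.
(* The empty graph is allowed so that the union of the empty chain qualifies. *)
pose admissible G := dominated_linear_graph G /\ (G = set0 \/ G (x0, p x0)).
have [A [[hA [A0|Ax0]] Amax]] :
    exists A, admissible A /\ forall B, A `<` B -> ~ admissible B.
  apply: Zorn_bigcup => F Fadm Ftot; split.
    by apply: bigcup_dominated_linear_graph => // G /Fadm[].
  have [[G FG Gx0]|nF] := pselect (exists2 G, F G & G (x0, p x0)).
    by right; exists G.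
  left; apply/seteqP; split => // z [G FG Gz].
  have [_ [G0|Gx0]] := Fadm _ FG; first by rewrite G0 in Gz.
  by apply: nF; exists G.
- have [G hG Gx0] := exists_dominated_linear_graph Dx0.
  by case: (Amax G); [rewrite A0; split => // /(_ _ Gx0)|split => //; right].
have [Adom Afun AD AZ] := hA.
have Atotal z : D z -> exists a, A (z, a).
  move=> Dz; apply: contrapT => nz.
  have [c hc] := ext_admissible_exists hA Dz Ax0.
  apply: (Amax (graph_ext A z c)); last first.
    by split; [exact: graph_ext_dominated|right; exact: sub_graph_ext].
  split; first exact: sub_graph_ext.
  by move=> /(_ _ (mem_graph_ext z c hA Ax0)) Azc; apply: nz; exists c.
have /choice[L AL] : forall z, exists a, D z -> A (z, a).
  move=> z; have [/Atotal[a Aza]|nDz] := pselect (D z); first by exists a.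
  by exists 0 => /nDz.
exists L; split.
- by move=> x y Dx Dy; apply: Afun (AL _ (DD Dx Dy)) (AD _ _ _ _ (AL _ Dx) (AL _ Dy)).
- by move=> k x Dx; apply: Afun (AL _ (DZ k Dx)) (AZ _ _ _ (AL _ Dx)).
- by move=> x /AL/Adom[].
- exact: Afun (AL _ Dx0) Ax0.
Qed.

End HahnBanach.

Section BoundedMeasurable.
Context {d : measure_display} {T : measurableType d} {R : realType}.
Implicit Types (X Y : T -> R).

Lemma Bb_cst m : Bb (cst m : T -> R).
Proof. by split; [exact: measurable_cst | exists `|m|]. Qed.

Lemma BbD X Y : Bb X -> Bb Y -> Bb (X + Y).
Proof.
move=> [mX [M hM]] [mY [N hN]]; split; first exact: measurable_funD.
by exists (M + N) => w; apply: le_trans (ler_normD _ _) (lerD (hM w) (hN w)).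
Qed.

Lemma BbZ k X : Bb X -> Bb (k *: X).
Proof.
move=> [mX [M hM]]; split; first exact: measurable_funM (measurable_cst k) mX.
by exists (`|k| * M) => w; rewrite normrM ler_wpM2l.
Qed.

Lemma Bb_indic A : measurable A -> Bb (\1_A : T -> R).
Proof.
move=> mA; split; first exact: measurable_indic.
by exists 1 => w; rewrite indicE; case: (_ \in _); rewrite ?normr1 ?normr0.
Qed.

Lemma Bb_bounds X : Bb X -> exists M, forall w, - M <= X w <= M.
Proof. by move=> [_ [M hM]]; exists M => w; rewrite -ler_norml. Qed.

End BoundedMeasurable.

Section RMax.
Context (d : measure_display) (T : measurableType d) (R : realType)
  (C : set (T -> R)) (H : (T -> R) -> R).
Hypotheses (hC : linear_subspace_with_constants C)
  (hH : sublinear_premium_principle C H).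
Implicit Types (X Y : T -> R).

Local Notation rmax X := (fine (RMax C H X)).

Let C_Bb X : C X -> Bb X. Proof. by case: hC => + _ _ _; apply. Qed.
Let C_cst m : C (cst m). Proof. by case: hC => _ + _ _; apply. Qed.
Let CD X Y : C X -> C Y -> C (X + Y). Proof. by case: hC => _ _ + _; apply. Qed.
Let CZ k X : C X -> C (k *: X). Proof. by case: hC => _ _ _; apply. Qed.
Let HD_cst X m : C X -> H (X + cst m) = H X + m.
Proof. by case: hH => -[+ _ _] _ _; apply. Qed.
Let H0 : H (cst 0) = 0. Proof. by case: hH => -[_ + _] _ _. Qed.
Let H_ge0 X : C X -> (forall w, 0 <= X w) -> 0 <= H X.
Proof. by case: hH => -[_ _ +] _ _; apply. Qed.
Let H_convex : convex_on C H. Proof. by case: hH. Qed.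
Let H_homo : pos_homogeneous_on C H. Proof. by case: hH. Qed.

Lemma H_cst m : H (cst m) = m.
Proof.
have -> : cst m = cst 0 + cst m :> (T -> R) by apply/funext => w; rewrite /= add0r.
by rewrite HD_cst // H0 add0r.
Qed.

Lemma H_subadd X Y : C X -> C Y -> H (X + Y) <= H X + H Y.
Proof.
move=> CX CY; have h2 : 0 <= (2 : R)^-1 <= 1 by lra.
have := H_convex (CZ 2 CX) (CZ 2 CY) h2.
have -> : (fun w => 2^-1 * (2 *: X) w + (1 - 2^-1) * (2 *: Y) w) = X + Y.
  apply/funext => w.
  by change (2^-1 * (2 * X w) + (1 - 2^-1) * (2 * Y w) = X w + Y w); field.
by rewrite !H_homo // ?ltr0Sn => /le_trans; apply; lra.
Qed.

Lemma RMax_fin_num X : Bb X -> RMax C H X \is a fin_num.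
Proof.
move=> /Bb_bounds[M hM].
have le_M : (RMax C H X <= M%:E)%E.
  apply: ereal_inf_lbound; exists (cst M); last by rewrite H_cst.
  by split => // w; case/andP: (hM w).
have ge_M : ((- M)%:E <= RMax C H X)%E.
  apply: le_ereal_inf_tmp => _ [X0 [CX0 X_le] <-]; rewrite lee_fin.
  have : 0 <= H (X0 + cst M).
    apply: H_ge0 => [|w]; first exact: CD.
    by change (0 <= X0 w + M); have := X_le w; case/andP: (hM w); lra.
  by rewrite HD_cst //; lra.
rewrite fin_numE; apply/andP.
by split; apply/eqP => RMax_oo; rewrite RMax_oo in le_M ge_M.
Qed.

Lemma rmax_le_H X X0 : Bb X -> C X0 -> (forall w, X w <= X0 w) -> rmax X <= H X0.
Proof.
move=> bX CX0 X_le; rewrite -lee_fin fineK; last exact: RMax_fin_num.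
by apply: ereal_inf_lbound; exists X0.
Qed.

Lemma rmax_ge X r : Bb X ->
  (forall X0, C X0 -> (forall w, X w <= X0 w) -> r <= H X0) -> r <= rmax X.
Proof.
move=> bX r_le; rewrite -lee_fin fineK; last exact: RMax_fin_num.
by apply: le_ereal_inf_tmp => _ [X0 [CX0 X_le] <-]; rewrite lee_fin; exact: r_le.
Qed.

Lemma rmax_le_H_on_C X : C X -> rmax X <= H X.
Proof. by move=> CX; apply: rmax_le_H => //; exact: C_Bb. Qed.

Lemma rmax_mono X Y : Bb X -> Bb Y -> (forall w, X w <= Y w) -> rmax X <= rmax Y.
Proof.
move=> bX bY XY; apply: rmax_ge => // X0 CX0 Y_le; apply: rmax_le_H => // w.
exact: le_trans (XY w) (Y_le w).
Qed.

Lemma rmaxD_cst X m : Bb X -> rmax (X + cst m) = rmax X + m.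
Proof.
move=> bX; have bXm := BbD bX (Bb_cst m).
apply/eqP; rewrite eq_le; apply/andP; split.
  rewrite -lerBlDr; apply: rmax_ge => // X0 CX0 X_le; rewrite lerBlDr -HD_cst //.
  by apply: rmax_le_H => [//||w]; [exact: CD | rewrite lerD2r].
apply: rmax_ge => // X0 CX0 X_le; rewrite -lerBrDr -HD_cst //.
by apply: rmax_le_H => [//||w]; [exact: CD | move: (X_le w); rewrite !fctE /=; lra].
Qed.

Lemma rmax0 : rmax 0 = 0.
Proof.
have C0 : C 0 by exact: (C_cst 0).
apply/eqP; rewrite eq_le; apply/andP; split; first by rewrite -H0 rmax_le_H_on_C.
by apply: rmax_ge => [|X0 CX0 X0_ge0]; [exact: Bb_cst | exact: H_ge0].
Qed.

Lemma rmax_cst m : rmax (cst m) = m.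
Proof. by rewrite -[cst m]add0r rmaxD_cst ?rmax0 ?add0r //; exact: Bb_cst. Qed.

Lemma rmax_subadd X Y : Bb X -> Bb Y -> rmax (X + Y) <= rmax X + rmax Y.
Proof.
move=> bX bY; rewrite -lerBlDr; apply: rmax_ge => // X0 CX0 X_le.
rewrite lerBlDr -lerBlDl; apply: rmax_ge => // Y0 CY0 Y_le.
rewrite lerBlDl; apply: le_trans (H_subadd CX0 CY0).
by apply: rmax_le_H => [||w]; [exact: BbD | exact: CD | exact: lerD].
Qed.

Lemma rmax_homo X t : Bb X -> 0 < t -> rmax (t *: X) = t * rmax X.
Proof.
move=> bX t0; have btX := BbZ t bX.
apply/eqP; rewrite eq_le; apply/andP; split.
  rewrite mulrC -ler_pdivrMr //; apply: rmax_ge => // X0 CX0 X_le.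
  rewrite ler_pdivrMr // mulrC -H_homo //.
  apply: rmax_le_H => [//||w]; first exact: CZ.
  by rewrite /= ler_pM2l.
apply: rmax_ge => // X0 CX0 X_le.
rewrite -ler_pdivlMl // -H_homo ?invr_gt0 //.
apply: rmax_le_H => [//||w]; first exact: CZ.
by change (X w <= t^-1 * X0 w); rewrite ler_pdivlMl //; exact: X_le.
Qed.

Lemma rmax_homo0 X t : Bb X -> 0 <= t -> rmax (t *: X) = t * rmax X.
Proof.
move=> bX; rewrite le_eqVlt => /predU1P[<-|t0]; last exact: rmax_homo.
by rewrite scale0r rmax0 mul0r.
Qed.

Lemma rmax_coherent : coherent_risk_measure (fun X => rmax X).
Proof.
split.
- exact: rmax_mono.
- exact: rmaxD_cst.
- exact: rmax0.
- move=> X Y l bX bY /andP[l0 l1].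
  apply: le_trans (rmax_subadd (BbZ l bX) (BbZ (1 - l) bY)) _.
  by rewrite !rmax_homo0 // subr_ge0.
- exact: rmax_homo.
Qed.

End RMax.

Section FinitelyAdditiveExpectation.
Context {d : measure_display} {T : measurableType d} {R : realType}.
Implicit Types (P : set T -> R) (s : seq (R * set T)) (A B : set T) (X Y : T -> R).

Lemma ba1_set0 P : ba1 P -> P set0 = 0.
Proof.
by move=> [_ _ PU]; have := PU _ _ measurable0 measurable0 (setI0 _); rewrite setU0; lra.
Qed.

Lemma ba1_split P B A : ba1 P -> measurable B -> measurable A ->
  P B = P (B `&` A) + P (B `&` ~` A).
Proof.
move=> [_ _ PU] mB mA; rewrite -PU; first by rewrite -setIUr setUCr setIT.
- exact: measurableI.
- exact/measurableI/measurableC.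
- by rewrite setIACA setICr setI0.
Qed.

Lemma simple_eval_nil (w : T) : simple_eval [::] w = 0 :> R.
Proof. by rewrite /simple_eval big_nil. Qed.

Lemma simple_eval_cons q s (w : T) :
  simple_eval (q :: s) w = q.1 * \1_(q.2) w + simple_eval s w.
Proof. by rewrite /simple_eval big_cons. Qed.

Lemma ba1_sum_split P s B A : ba1 P -> measurable B -> measurable A ->
  (forall q, List.In q s -> measurable q.2) ->
  \sum_(q <- s) q.1 * P (q.2 `&` B) =
  \sum_(q <- s) q.1 * P (q.2 `&` (B `&` A)) +
  \sum_(q <- s) q.1 * P (q.2 `&` (B `&` ~` A)).
Proof.
move=> hP mB mA; elim: s => [|q s IH] ms; first by rewrite !big_nil addr0.
rewrite !big_cons IH => [|q' sq']; last by apply: ms; right.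
rewrite !setIA (ba1_split hP _ mA); last by apply: measurableI => //; apply: ms; left.
by rewrite mulrDr addrACA.
Qed.

Lemma ba1_simple_le P s B k : ba1 P -> measurable B ->
  (forall q, List.In q s -> measurable q.2) ->
  (forall w, B w -> simple_eval s w <= k) ->
  \sum_(q <- s) q.1 * P (q.2 `&` B) <= k * P B.
Proof.
move=> hP; have [P_ge0 _ _] := hP.
elim: s B k => [|[c A] s IH] B k mB ms s_le.
  rewrite big_nil; have [[w Bw]|nB] := pselect (B !=set0).
    by apply: mulr_ge0 (P_ge0 _ mB); move: (s_le w Bw); rewrite simple_eval_nil.
  rewrite (_ : B = set0) ?ba1_set0 ?mulr0 //.
  by apply/seteqP; split => // w Bw; apply: nB; exists w.
have mA : measurable A by apply: (ms (c, A)); left.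
have ms' q : List.In q s -> measurable q.2 by move=> sq; apply: ms; right.
have le_in w : (B `&` A) w -> simple_eval s w <= k - c.
  move=> [Bw Aw]; move: (s_le w Bw); rewrite simple_eval_cons /=.
  by rewrite indicE mem_set // mulr1 => ?; lra.
have le_out w : (B `&` ~` A) w -> simple_eval s w <= k.
  move=> [Bw nAw]; move: (s_le w Bw); rewrite simple_eval_cons /=.
  by rewrite indicE memNset // mulr0 add0r.
have := IH _ _ (measurableI _ _ mB mA) ms' le_in.
have := IH _ _ (measurableI _ _ mB (measurableC mA)) ms' le_out.
rewrite big_cons (ba1_sum_split hP mB mA ms') (ba1_split hP mB mA) /= [A `&` B]setIC.
lra.
Qed.

Lemma simple_int_le P s M : ba1 P -> (forall q, List.In q s -> measurable q.2) ->
  (forall w, simple_eval s w <= M) -> simple_int P s <= M.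
Proof.
move=> hP ms s_le; have [_ PT _] := hP.
have := ba1_simple_le hP measurableT ms (fun w _ => s_le w).
by rewrite PT mulr1; under eq_bigr do rewrite setIT.
Qed.

Lemma expect_has_sup P X : ba1 P -> Bb X ->
  has_sup [set simple_int P s | s in simple_below X].
Proof.
move=> hP /Bb_bounds[M hM]; split.
  exists (simple_int P [:: (- M, setT)]), [:: (- M, setT)] => //; split.
    by move=> q [<-|//]; exact: measurableT.
  move=> w; rewrite simple_eval_cons simple_eval_nil indicE mem_set // mulr1 addr0.
  by case/andP: (hM w).
exists M => _ [s [ms s_le] <-]; apply: simple_int_le => // w.
by apply: le_trans (s_le w) _; case/andP: (hM w).
Qed.

Lemma expect_mono P X Y : ba1 P -> Bb X -> Bb Y ->
  (forall w, X w <= Y w) -> expect P X <= expect P Y.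
Proof.
move=> hP bX bY XY; have [S0 _] := expect_has_sup hP bX.
apply: ge_sup => // _ [s [ms s_le] <-]; apply: sup_upper_bound.
  exact: expect_has_sup.
by exists s => //; split => // w; exact: le_trans (s_le w) (XY w).
Qed.

End FinitelyAdditiveExpectation.

Section SimpleFunctions.
Context {d : measure_display} {T : measurableType d} {R : realType}.

Lemma sum_indic_unique (I : eqType) (r : seq I) (f : I -> R) (A : I -> set T) w i :
  uniq r -> i \in r -> (forall j, A j w <-> j = i) ->
  \sum_(j <- r) f j * \1_(A j) w = f i.
Proof.
move=> ur ir Aw; rewrite (bigD1_seq i) //= indicE mem_set ?mulr1; last exact/Aw.
rewrite big1 ?addr0 // => j ji; rewrite indicE memNset ?mulr0 // => /Aw ej.
by rewrite ej eqxx in ji.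
Qed.

Lemma indicU_disjoint (A B : set T) : A `&` B = set0 ->
  \1_(A `|` B) = \1_A + \1_B :> (T -> R).
Proof.
move=> AB0; apply/funext => w; change (\1_(A `|` B) w = \1_A w + \1_B w :> R).
have : (w \in A) && (w \in B) = false by rewrite -in_setI AB0 in_set0.
by rewrite !indicE in_setU; case: (w \in A); case: (w \in B); rewrite ?addr0 ?add0r.
Qed.

Lemma simple_below_approx (X : T -> R) e : Bb X -> 0 < e ->
  exists s, simple_below X s /\ forall w, X w - e <= simple_eval s w.
Proof.
move=> bX e0; have [mX _] := bX; have [M hM] := Bb_bounds bX.
pose N := (Num.truncn (M / e)).+1.
have MN : M < N%:R * e by rewrite -ltr_pdivrMr // truncnS_gt.
pose v i : R := (i%:R - N%:R) * e.
(* Slabs of width e, i < 2N, partition T because |X| <= M < N e. *)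
pose A i := [set w | v i <= X w < v i + e].
have mA i : measurable (A i).
  have -> : A i = setT `&` X @^-1` [set` `[v i, v i + e[].
    by apply/seteqP; split => w /=; rewrite in_itv /=; [move=> ?; split|case].
  by apply: mX => //; exact: measurable_itv.
have level w : exists2 i, (i < N + N)%N & forall j, A j w <-> j = i.
  pose y := (X w + N%:R * e) / e.
  have /andP[Mw wM] := hM w.
  have y_ge0 : 0 <= y by rewrite divr_ge0 //; [lra | exact: ltW].
  exists (Num.truncn y).
    by rewrite truncn_lt_nat // ltr_pdivrMr // natrD mulrDl; lra.
  move=> j; suff -> : A j w <-> (j%:R <= y < j.+1%:R).
    by rewrite -truncn_eq //; split => [/eqP <-|->].
  rewrite /A /= /y ler_pdivlMr // ltr_pdivrMr // /v.
  rewrite mulrBl -[j.+1]addn1 natrD mulrDl mul1r.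
  by split => /andP[lo hi]; apply/andP; split; lra.
pose s := [seq (v i, A i) | i <- iota 0 (N + N)].
have s_eval w : exists i, simple_eval s w = v i /\ A i w.
  have [i iN Aw] := level w; exists i; split; last exact/Aw.
  rewrite /simple_eval big_map.
  by apply: sum_indic_unique; rewrite ?iota_uniq ?mem_iota.
exists s; split; last by move=> w; have [i [-> /andP[lo hi]]] := s_eval w; lra.
split; last by move=> w; have [i [-> /andP[]]] := s_eval w.
move=> q qs.
have [i [<- _]] := proj1 (List.in_map_iff (fun i => (v i, A i)) (iota 0 (N + N)) q) qs.
exact: mA.
Qed.

End SimpleFunctions.

Section FunctionalProbability.
Context {d : measure_display} {T : measurableType d} {R : realType}
  (L : (T -> R) -> R).
Hypotheses (LD : forall X Y, Bb X -> Bb Y -> L (X + Y) = L X + L Y)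
  (LZ : forall k X, Bb X -> L (k *: X) = k * L X)
  (L_ge0 : forall X, Bb X -> (forall w, 0 <= X w) -> 0 <= L X)
  (L1 : L (cst 1) = 1).
Implicit Types (X Y : T -> R) (s : seq (R * set T)).

Definition prob_of (A : set T) : R := L \1_A.

Lemma L_mono X Y : Bb X -> Bb Y -> (forall w, X w <= Y w) -> L X <= L Y.
Proof.
move=> bX bY XY; rewrite -subr_ge0 -mulN1r -LZ // -LD //; last exact: BbZ.
apply: L_ge0 => [|w]; first exact/BbD/BbZ.
by change (0 <= Y w + -1 * X w); rewrite mulN1r subr_ge0.
Qed.

Lemma LD_cst X m : Bb X -> L (X + cst m) = L X + m.
Proof.
move=> bX; have -> : cst m = m *: (cst 1 : T -> R).
  by apply/funext => w; change (m = m * 1); rewrite mulr1.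
have b1 : Bb (cst 1 : T -> R) := Bb_cst 1.
by rewrite LD ?LZ ?L1 ?mulr1 //; exact: BbZ.
Qed.

Lemma prob_of_ba1 : ba1 prob_of.
Proof.
split.
- move=> A mA; apply: L_ge0 => [|w]; first exact: Bb_indic.
  by rewrite indicE ler0n.
- by rewrite /prob_of indicT.
- move=> A B mA mB AB0; rewrite /prob_of indicU_disjoint // LD //; exact: Bb_indic.
Qed.

Let simple_eval_nil_fun : simple_eval [::] = 0 :> (T -> R).
Proof. by apply/funext => w; rewrite simple_eval_nil. Qed.

Let simple_eval_cons_fun q s :
  simple_eval (q :: s) = q.1 *: (\1_(q.2) : T -> R) + simple_eval s.
Proof. by apply/funext => w; rewrite simple_eval_cons. Qed.

Lemma simple_eval_Bb s : (forall q, List.In q s -> measurable q.2) ->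
  Bb (simple_eval s).
Proof.
elim: s => [|q s IH] ms; first by rewrite simple_eval_nil_fun; exact: Bb_cst.
rewrite simple_eval_cons_fun; apply: BbD; last by apply: IH => q' sq'; apply: ms; right.
by apply/BbZ/Bb_indic; apply: ms; left.
Qed.

Lemma simple_int_prob_of s : (forall q, List.In q s -> measurable q.2) ->
  simple_int prob_of s = L (simple_eval s).
Proof.
elim: s => [|q s IH] ms.
  rewrite /simple_int big_nil simple_eval_nil_fun -(scale0r (cst 1 : T -> R)).
  by rewrite LZ ?mul0r //; exact: Bb_cst.
have ms' q' : List.In q' s -> measurable q'.2 by move=> sq'; apply: ms; right.
have mq : measurable q.2 by apply: ms; left.
rewrite /simple_int big_cons -/(simple_int _ s) IH // simple_eval_cons_fun.
by rewrite LD ?LZ //; [exact: Bb_indic | exact/BbZ/Bb_indic | exact: simple_eval_Bb].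
Qed.

Lemma expect_prob_of X : Bb X -> expect prob_of X = L X.
Proof.
move=> bX; have hs := expect_has_sup prob_of_ba1 bX.
apply/eqP; rewrite eq_le; apply/andP; split.
  apply: ge_sup; first by case: hs.
  move=> _ [s [ms s_le] <-]; rewrite simple_int_prob_of //.
  by apply: L_mono => //; exact: simple_eval_Bb.
apply/ler_addgt0Pr => e e0; rewrite -lerBlDr.
have [s [[ms s_le] s_ge]] := simple_below_approx bX e0.
apply: (@le_trans _ _ (simple_int prob_of s)).
  rewrite simple_int_prob_of // -LD_cst //; apply: L_mono => //.
  - exact/BbD/Bb_cst.
  - exact: simple_eval_Bb.
by apply: sup_upper_bound => //; exists s.
Qed.

End FunctionalProbability.

Section Representation.
Context (d : measure_display) (T : measurableType d) (R : realType)
  (C : set (T -> R)) (H : (T -> R) -> R).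
Hypotheses (hC : linear_subspace_with_constants C)
  (hH : sublinear_premium_principle C H).
Implicit Types (X Y : T -> R) (P : set T -> R).

Local Notation rmax X := (fine (RMax C H X)).

Let C_Bb X : C X -> Bb X. Proof. by case: hC => + _ _ _; apply. Qed.

Lemma Pset_attains_rmax X : Bb X -> exists2 P, Pset C H P & expect P X = rmax X.
Proof.
move=> bX.
have [L [LD LZ L_le LX]] := hahn_banach (Bb_cst 0) BbD BbZ
  (rmax_subadd hC hH) (rmax_homo hC hH) bX.
have LN Y : Bb Y -> - L Y <= rmax ((-1) *: Y).
  by move=> bY; rewrite -[- L Y]mulN1r -LZ //; apply: L_le; exact: BbZ.
have L_ge0 Y : Bb Y -> (forall w, 0 <= Y w) -> 0 <= L Y.
  move=> bY Y_ge0; rewrite -oppr_le0 -(rmax0 hC hH).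
  apply: le_trans (LN _ bY) (rmax_mono hC hH _ (Bb_cst 0) _) => [|w].
    exact: (BbZ (-1) bY).
  by change (-1 * Y w <= 0); rewrite mulN1r oppr_le0.
have L1 : L (cst 1) = 1.
  have : L (cst 1) <= 1.
    by rewrite -[X in _ <= X](rmax_cst hC hH 1); apply: L_le; exact: Bb_cst.
  have : - L (cst 1) <= -1.
    apply: le_trans (LN _ (Bb_cst 1)) _.
    have -> : (-1) *: (cst 1 : T -> R) = cst (-1).
      by apply/funext => w; change (-1 * 1 = -1 :> R); rewrite mulr1.
    by rewrite rmax_cst.
  lra.
exists (prob_of L); last by rewrite expect_prob_of.
split; first exact: prob_of_ba1.
move=> X0 CX0; rewrite expect_prob_of //; last exact: C_Bb.
by apply: le_trans (L_le _ (C_Bb CX0)) _; exact: rmax_le_H_on_C.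
Qed.

Lemma Pset_expect_le P X : Pset C H P -> Bb X -> expect P X <= rmax X.
Proof.
move=> [hP PH] bX; apply: rmax_ge => // X0 CX0 X_le.
by apply: le_trans (PH _ CX0); apply: expect_mono => //; exact: C_Bb.
Qed.

End Representation.

Theorem corollary3p3 (d : measure_display) (T : measurableType d) (R : realType)
  (C : set (T -> R)) (H : (T -> R) -> R) :
  linear_subspace_with_constants C ->
  sublinear_premium_principle C H ->
  (forall X, Bb X -> RMax C H X \is a fin_num) /\
  coherent_risk_measure (fun X => fine (RMax C H X)) /\
  (forall X, Bb X ->
     (exists2 P, Pset C H P & (expect P X)%:E = RMax C H X) /\
     (forall P, Pset C H P -> ((expect P X)%:E <= RMax C H X)%E)).
Proof.
move=> hC hH; split; first by move=> X; exact: RMax_fin_num.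
split; first exact: rmax_coherent.
move=> X bX; rewrite -(fineK (RMax_fin_num hC hH bX)); split.
  by have [P PH EP] := Pset_attains_rmax hC hH bX; exists P; rewrite ?EP.
by move=> P PH; rewrite lee_fin; exact: Pset_expect_le.
Qed.
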